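(* Let $k\le n$ be a positive integer. Suppose $f:2^E\times O^E\to\mathbb{R}_{\ge0}$ is worst-case monotone and worst-case submodular with respect to $p(\phi)$ and satisfies minimal dependency. Let $\pi^g$ be the adaptive worst-case greedy policy for cardinality $k$, and let $\pi^*_{wc}$ maximize $f_{wc}(\pi)$ over all policies $\pi$ with $|E(\pi,\phi)|\le k$ for all $\phi\in U^+$. Then $f_{wc}(\pi^g)\ge(1-1/e)\,f_{wc}(\pi^*_{wc})$.
   Context: Setting. $E$ is a finite set of $n$ items and $O$ a finite set of states. A realization is a function $\phi:E\to O$; $p$ is a probability distribution (prior) on the set of all realizations, $\Phi$ denotes a random realization with law $p$, and $U^+=\{\phi: p(\phi)>0\}$. A partial realization is a function $\psi:S\to O$ with $S\subseteq E$, $\mathrm{dom}(\psi)=S$; it is identified with the set of pairs $\{(e,\psi(e)):e\in S\}$, so $\psi\subseteq\psi'$ means $\mathrm{dom}(\psi)\subseteq\mathrm{dom}(\psi')$ and they agree on $\mathrm{dom}(\psi)$. A realization $\phi$ is consistent with $\psi$, written $\phi\sim\psi$, if it agrees with $\psi$ on $\mathrm{dom}(\psi)$. Only partial realizations with $\Pr[\Phi\sim\psi]>0$ are considered, and $p(\phi\mid\psi)=\Pr[\Phi=\phi\mid\Phi\sim\psi]$. For $S\subseteq E$ and a partial realization $\psi$, $f(S,\psi)=\mathbb{E}[f(S,\Phi)\mid\Phi\sim\psi]$. For $e\notin\mathrm{dom}(\psi)$, let $O(e,\psi)=\{o\in O:\exists\phi\text{ with }p(\phi\mid\psi)>0,\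 \phi(e)=o\}$ and define the worst-case marginal utility $f_{wc}(e\mid\psi)=\min_{o\in O(e,\psi)}\{f(\mathrm{dom}(\psi)\cup\{e\},\psi\cup\{(e,o)\})-f(\mathrm{dom}(\psi),\psi)\}$. $f$ is worst-case submodular if $f_{wc}(e\mid\psi)\ge f_{wc}(e\mid\psi')$ for all partial realizations $\psi\subseteq\psi'$ and all $e\in E\setminus\mathrm{dom}(\psi')$; it is worst-case monotone if $f_{wc}(e\mid\psi)\ge0$ for all $\psi$ and $e\notin\mathrm{dom}(\psi)$. $f$ satisfies minimal dependency if $f(\mathrm{dom}(\psi),\psi)=f(\mathrm{dom}(\psi),\phi)$ for every partial realization $\psi$ and every $\phi\in U^+$ with $\phi\sim\psi$. Policies. A (deterministic) policy $\pi$ is a rule which, given the current observation (the partial realization of the items selected so far), either selects a new item or stops; after an item $e$ is selected under realization $\phi$, the state $\phi(e)$ is observed. $E(\pi,\phi)$ is the set of items selected by $\pi$ under $\phi$. The worst-case utility is $f_{wc}(\pi)=\min_{\phi\in U^+}f(E(\pi,\phi),\phi)$. Adaptive worst-case greedy policy for cardinality $k$, $\pi^g$: start with $\psi_0=\emptyset$; for $t=1,\dots,k$ select $e_t\in\arg\max_{e\in E\setminus\mathrm{dom}(\psi_{t-1})}f_{wc}(e\mid\psi_{t-1})$ (ties broken arbitrarily), observe $\Phi(e_t)$, and set $\psi_t=\psi_{t-1}\cup\{(e_t,\Phi(e_t))\}$. *)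

From HB Require Import structures.
From mathcomp Require Import all_boot all_order all_algebra.
From mathcomp Require Import reals sequences.
Set Implicit Arguments. Unset Strict Implicit. Unset Printing Implicit Defensive.
Import Order.TTheory GRing.Theory Num.Theory.
Local Open Scope ring_scope.

Section AdaptiveWC.
Variables (R : realType) (E O : finType).

(* realizations: {ffun E -> O};  partial realizations: {ffun E -> option O},
   with domain the set of items mapped to Some _. *)
Definition preal := {ffun E -> option O}.

Definition pempty : preal := [ffun _ => None].

Definition pdom (psi : preal) : {set E} := [set e | psi e != None].

Definition psub (psi psi' : preal) : Prop :=
  forall e, psi e != None -> psi' e = psi e.

Definition consistent (phi : {ffun E -> O}) (psi : preal) : bool :=
  [forall e, (psi e == None) || (psi e == Some (phi e))].

Definition pext (psi : preal) (e : E) (o : O) : preal :=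
  [ffun x => if x == e then Some o else psi x].

(* minimum of F over a finite set A (0 if A is empty; never used that way) *)
Definition minover (T : finType) (A : {set T}) (F : T -> R) : R :=
  match [pick x in A] with
  | Some x0 => \big[Num.min/F x0]_(x in A) F x
  | None => 0
  end.

Variable p : {ffun E -> O} -> R.
Variable f : {set E} -> {ffun E -> O} -> R.

Definition prc (psi : preal) : R := \sum_(phi | consistent phi psi) p phi.

Definition pcond (phi : {ffun E -> O}) (psi : preal) : R :=
  if consistent phi psi then p phi / prc psi else 0.

Definition fexp (S : {set E}) (psi : preal) : R :=
  (\sum_(phi | consistent phi psi) p phi * f S phi) / prc psi.

Definition Oset (e : E) (psi : preal) : {set O} :=
  [set o | [exists phi, (0 < pcond phi psi) && (phi e == o)]].

Definition fwc (e : E) (psi : preal) : R :=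
  minover (Oset e psi)
    (fun o => fexp (e |: pdom psi) (pext psi e o) - fexp (pdom psi) psi).

Definition wc_submodular : Prop :=
  forall psi psi' e, 0 < prc psi -> 0 < prc psi' -> psub psi psi' ->
    e \notin pdom psi' -> fwc e psi' <= fwc e psi.

Definition wc_monotone : Prop :=
  forall psi e, 0 < prc psi -> e \notin pdom psi -> 0 <= fwc e psi.

Definition minimal_dependency : Prop :=
  forall psi phi, 0 < prc psi -> 0 < p phi -> consistent phi psi ->
    fexp (pdom psi) psi = f (pdom psi) phi.

(* Deterministic policies: given the current observation, select an item
   (Some e) or stop (None).  Selecting an already-selected item is treated as
   stopping (no new observation is made). *)
Definition policy := preal -> option E.

Definition step (pi : policy) (phi : {ffun E -> O}) (psi : preal) : preal :=
  match pi psi with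
  | Some e => if psi e == None then pext psi e (phi e) else psi
  | None => psi
  end.

(* final observation: a policy makes at most #|E| selections *)
Definition run (pi : policy) (phi : {ffun E -> O}) : preal :=
  iter #|E| (step pi phi) pempty.

Definition Esel (pi : policy) (phi : {ffun E -> O}) : {set E} :=
  pdom (run pi phi).

Definition Uplus : {set {ffun E -> O}} := [set phi | 0 < p phi].

Definition fwc_pol (pi : policy) : R :=
  minover Uplus (fun phi => f (Esel pi phi) phi).

Definition card_bounded (k : nat) (pi : policy) : Prop :=
  forall phi, 0 < p phi -> (#|Esel pi phi| <= k)%N.

Definition greedy_policy (k : nat) (pi : policy) : Prop :=
  forall psi, 0 < prc psi ->
    if (#|pdom psi| < k)%N then
      exists e, [/\ pi psi = Some e, e \notin pdom psi &
                  forall e', e' \notin pdom psi -> fwc e' psi <= fwc e psi]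
    else pi psi = None.

End AdaptiveWC.

From HB Require Import structures.
From mathcomp Require Import all_boot all_order all_algebra.
From mathcomp Require Import reals sequences exp lra.
Import Order.TTheory GRing.Theory Num.Theory.
Local Open Scope ring_scope.
Set Implicit Arguments. Unset Strict Implicit. Unset Printing Implicit Defensive.

(* 1. Under minimal dependency the conditional utility f(dom psi, psi) of an
      observation equals f(dom psi, phi) for every phi in U+ consistent with
      psi; hence the worst-case gain f_wc(e | psi) is at most the gain
      realized by any such phi, and worst-case monotonicity makes every
      f(., phi), phi in U+, monotone.
   2. Adversary lemma: if every worst-case gain at psi is at most M, an
      adversary revealing, for each new item, the state achieving the
      worst-case gain drives any policy with at most k selections to a
      realization with utility at most f(dom psi, psi) + k M; worst-case
      submodularity transfers the bound M from psi to later observations.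
   3. Applied to the greedy observation after t steps with M the greedy gain,
      this shrinks the gap to the optimum by a factor 1 - 1/k per step, and
      (1 - 1/k)^k <= 1/e. *)

Lemma one_sub_inv_nat_ge0 (R : numFieldType) (k : nat) : (0 < k)%N ->
  0 <= 1 - k%:R^-1 :> R.
Proof. by move=> k_gt0; rewrite subr_ge0 invf_le1 ?ltr0n // ler1n. Qed.

Section Minover.
Variables (R : realType) (T : finType) (A : {set T}) (F : T -> R).

Lemma minover_le x : x \in A -> minover A F <= F x.
Proof.
move=> xA; rewrite /minover; case: pickP => [x0 _|/(_ x)]; last by rewrite xA.
by rewrite (bigD1 x) //= ge_min lexx.
Qed.

Lemma minover_ex x : x \in A -> exists2 y, y \in A & minover A F = F y.
Proof.
move=> xA; rewrite /minover; case: pickP => [x0 x0A|/(_ x)]; last by rewrite xA.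
elim/big_ind: _ => [|a b [ya ? ->] [yb ? ->]|y yA]; first by exists x0.
- by rewrite minEle; case: ifP => _; [exists ya | exists yb].
- by exists y.
Qed.

End Minover.

Section PartialRealizations.
Variables (E O : finType).
Implicit Types (psi chi : preal E O) (phi : {ffun E -> O}).

Lemma consistentP phi psi :
  reflect (forall e o, psi e = Some o -> phi e = o) (consistent phi psi).
Proof.
apply: (iffP forallP) => [C e o He|C e].
  by move: (C e); rewrite He /= => /eqP [].
by case He: (psi e) => [o|] //=; rewrite (C _ _ He).
Qed.

Lemma consistent_pempty phi : consistent phi (pempty E O).
Proof. by apply/forallP => x; rewrite ffunE. Qed.

Lemma consistent_pext phi psi e o : psi e = None ->
  consistent phi (pext psi e o) = consistent phi psi && (phi e == o).
Proof.
move=> psi_e; apply/consistentP/andP => [C|[/consistentP C /eqP <-] x o'].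
  split; last by apply/eqP; apply: C; rewrite ffunE eqxx.
  apply/consistentP => x o' Hx; apply: C; rewrite ffunE; case: eqP => // xe.
  by move: Hx; rewrite xe psi_e.
by rewrite ffunE; case: eqP => [-> [] //|_]; apply: C.
Qed.

Lemma pdom_pempty : pdom (pempty E O) = set0.
Proof. by apply/setP => x; rewrite !inE ffunE. Qed.

Lemma pdom_pext psi e o : pdom (pext psi e o) = e |: pdom psi.
Proof. by apply/setP => x; rewrite !inE ffunE; case: (x == e). Qed.

Definition restr phi (A : {set E}) : preal E O :=
  [ffun x => if x \in A then Some (phi x) else None].

Lemma pdom_restr phi A : pdom (restr phi A) = A.
Proof. by apply/setP => x; rewrite !inE ffunE; case: (x \in A). Qed.

Lemma consistent_restr phi A : consistent phi (restr phi A).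
Proof. by apply/consistentP => x o; rewrite ffunE; case: (x \in A) => // -[]. Qed.

(* The adversary's record chi extends both the initial observation psi and
   the policy's current observation ps, and reveals nothing more. *)
Definition tracks psi chi ps : Prop :=
  [/\ psub psi chi, psub ps chi & pdom chi = pdom psi :|: pdom ps].

Lemma tracks_start psi : tracks psi psi (pempty E O).
Proof.
by split=> // [x|]; rewrite ?ffunE ?eqxx // pdom_pempty setU0.
Qed.

(* The policy queries an item already revealed by the adversary. *)
Lemma tracks_known psi chi ps e o :
  tracks psi chi ps -> chi e = Some o -> tracks psi chi (pext ps e o).
Proof.
move=> [sub_psi sub_ps dom_chi] chi_e; split => //.
  by move=> x; rewrite ffunE; case: (x =P e) => [-> _|_]; [rewrite chi_e | apply: sub_ps].
have /setUidPr e_dom : [set e] \subset pdom chi by rewrite sub1set inE chi_e.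
by rewrite pdom_pext setUCA -dom_chi e_dom.
Qed.

(* The policy queries a new item and the adversary answers o. *)
Lemma tracks_new psi chi ps e o :
  tracks psi chi ps -> chi e = None -> tracks psi (pext chi e o) (pext ps e o).
Proof.
move=> [sub_psi sub_ps dom_chi] chi_e; split.
- move=> x psi_x; rewrite ffunE; case: (x =P e) => [xe|_]; last exact: sub_psi.
  have := sub_psi _ psi_x; rewrite xe chi_e => psi_e.
  by rewrite xe -psi_e eqxx in psi_x.
- by move=> x; rewrite !ffunE; case: (x =P e) => // _; apply: sub_ps.
- by rewrite !pdom_pext dom_chi setUCA.
Qed.

End PartialRealizations.

Section Prior.
Variables (R : realType) (E O : finType) (p : {ffun E -> O} -> R).
Hypothesis p_ge0 : forall phi, 0 <= p phi.
Implicit Types (psi : preal E O) (phi : {ffun E -> O}).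

Lemma prc_gt0 psi phi : 0 < p phi -> consistent phi psi -> 0 < prc p psi.
Proof.
move=> p_phi phi_psi; rewrite /prc (bigD1 phi) //=.
by apply: (lt_le_trans p_phi); rewrite lerDl sumr_ge0.
Qed.

Lemma prc_gt0E psi : 0 < prc p psi -> exists phi, 0 < p phi /\ consistent phi psi.
Proof.
move=> prc_psi.
case: (pickP (fun phi => consistent phi psi && (0 < p phi))) => [phi /andP[]|none].
  by exists phi.
move: prc_psi; rewrite /prc big1 ?ltxx // => phi phi_psi.
by move: (none phi); rewrite phi_psi /= lt_def p_ge0 andbT => /negbFE /eqP.
Qed.

Lemma Uplus_nonempty : \sum_phi p phi = 1 -> exists phi, 0 < p phi.
Proof.
move=> p_sum; have [|phi [p_phi _]] := @prc_gt0E (pempty E O); last by exists phi.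
by rewrite /prc (eq_bigl xpredT) ?p_sum ?ltr01 // => phi; apply: consistent_pempty.
Qed.

Lemma Oset_mem psi e o : 0 < prc p psi ->
  o \in Oset p e psi <-> exists phi, [/\ 0 < p phi, consistent phi psi & phi e = o].
Proof.
move=> prc_psi; rewrite inE; split.
  move=> /existsP [phi /andP [pos /eqP phi_e]]; exists phi; move: pos.
  rewrite /pcond; case: ifP => phi_psi; last by rewrite ltxx.
  by rewrite pmulr_lgt0 ?invr_gt0.
move=> [phi [p_phi phi_psi phi_e]]; apply/existsP; exists phi.
by rewrite /pcond phi_psi divr_gt0 //= phi_e.
Qed.

End Prior.

Section WorstCaseUtility.
Variables (R : realType) (E O : finType).
Variables (p : {ffun E -> O} -> R) (f : {set E} -> {ffun E -> O} -> R).
Hypothesis p_ge0 : forall phi, 0 <= p phi.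
Hypothesis f_mono_wc : wc_monotone p f.
Hypothesis f_sub_wc : wc_submodular p f.
Hypothesis f_md : minimal_dependency p f.
Implicit Types (psi chi ps : preal E O) (phi : {ffun E -> O}).

Local Notation value psi := (fexp p f (pdom psi) psi).

Lemma value_realized psi phi : 0 < p phi -> consistent phi psi ->
  value psi = f (pdom psi) phi.
Proof. by move=> p_phi phi_psi; apply: f_md => //; apply: prc_gt0 phi_psi. Qed.

Lemma fwc_attained psi e : 0 < prc p psi -> exists2 o, o \in Oset p e psi &
  fwc p f e psi = fexp p f (e |: pdom psi) (pext psi e o) - value psi.
Proof.
move=> prc_psi; have [phi [p_phi phi_psi]] := prc_gt0E p_ge0 prc_psi.
have o_in : phi e \in Oset p e psi by apply/Oset_mem => //; exists phi.
exact: minover_ex o_in.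
Qed.

Lemma fwc_le_gain psi phi e : 0 < p phi -> consistent phi psi -> e \notin pdom psi ->
  f (pdom psi) phi + fwc p f e psi <= f (e |: pdom psi) phi.
Proof.
move=> p_phi phi_psi e_psi; have prc_psi := prc_gt0 p_ge0 p_phi phi_psi.
have psi_e : psi e = None by apply/eqP; rewrite inE negbK in e_psi.
have phi_ext : consistent phi (pext psi e (phi e)) by rewrite consistent_pext // phi_psi eqxx.
have o_in : phi e \in Oset p e psi by apply/Oset_mem => //; exists phi.
have := minover_le (fun o => fexp p f (e |: pdom psi) (pext psi e o) - value psi) o_in.
rewrite -/(fwc p f e psi) -(pdom_pext psi e (phi e)) (value_realized p_phi phi_ext).
by rewrite (value_realized p_phi phi_psi) pdom_pext lerBrDl addrC.
Qed.

(* Adding an item never hurts a realization in U+: apply worst-case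
   monotonicity at the observation revealing phi on A. *)
Lemma f_step phi (A : {set E}) e : 0 < p phi -> f A phi <= f (e |: A) phi.
Proof.
move=> p_phi; have [e_A|e_A] := boolP (e \in A).
  by have /setUidPr -> : [set e] \subset A by rewrite sub1set.
have phi_r := consistent_restr phi A; have prc_r := prc_gt0 p_ge0 p_phi phi_r.
have := fwc_le_gain p_phi phi_r; rewrite pdom_restr => /(_ e e_A).
by apply: le_trans; rewrite lerDl f_mono_wc // pdom_restr.
Qed.

Lemma f_mono phi (A B : {set E}) : 0 < p phi -> A \subset B -> f A phi <= f B phi.
Proof.
move=> p_phi; move Hn: #|B :\: A| => n; elim: n A Hn => [|n IH] A Hn AB.
  move/eqP: Hn; rewrite cards_eq0 setD_eq0 => BA.
  by have -> : A = B by apply/eqP; rewrite eqEsubset AB.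
have /set0Pn [e eBA] : B :\: A != set0 by rewrite -card_gt0 Hn.
move: (eBA); rewrite inE => /andP [e_A e_B].
apply: (le_trans (f_step A e p_phi)); apply: IH.
  by move: Hn; rewrite (cardsD1 e) eBA add1n => -[<-]; rewrite setDDl setUC.
by rewrite subUset sub1set e_B AB.
Qed.

Section Adversary.
Variables (psi : preal E O) (M : R).
Hypothesis prc_psi : 0 < prc p psi.
Hypothesis M_ge0 : 0 <= M.
Hypothesis fwc_psi_le : forall e, e \notin pdom psi -> fwc p f e psi <= M.

(* One adversary move: for a new item e it can reveal a state of positive
   probability with gain at most M (worst-case submodularity). *)
Lemma adversary_step chi e : 0 < prc p chi -> psub psi chi -> chi e = None ->
  exists o, 0 < prc p (pext chi e o) /\ value (pext chi e o) <= value chi + M.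
Proof.
move=> prc_chi sub_psi chi_e; have e_chi : e \notin pdom chi by rewrite inE chi_e.
have e_psi : e \notin pdom psi.
  by apply: contraNN e_chi; rewrite !inE => psi_e; rewrite (sub_psi _ psi_e).
have [o o_in fwc_eq] := fwc_attained e prc_chi.
have [phi [p_phi phi_chi phi_e]] := (Oset_mem e o prc_chi).1 o_in.
exists o; split.
  by apply: (prc_gt0 p_ge0 p_phi); rewrite consistent_pext // phi_chi phi_e eqxx.
rewrite pdom_pext addrC -lerBlDr -fwc_eq.
by apply: le_trans (fwc_psi_le e_psi); apply: f_sub_wc.
Qed.

(* Invariant of the adversary strategy, for m more steps of any policy. *)
Lemma adversary pi m chi ps : 0 < prc p chi -> tracks psi chi ps ->
  exists phi, [/\ 0 < p phi, consistent phi chi &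
    f (pdom psi :|: pdom (iter m (step pi phi) ps)) phi + #|pdom ps|%:R * M <=
    value chi + #|pdom (iter m (step pi phi) ps)|%:R * M].
Proof.
elim: m chi ps => [|m IH] chi ps prc_chi tr.
  have [phi [p_phi phi_chi]] := prc_gt0E p_ge0 prc_chi.
  case: tr => _ _ dom_chi; exists phi.
  by rewrite /= (value_realized p_phi phi_chi) dom_chi.
have determined ps1 : (forall phi, consistent phi chi -> step pi phi ps = ps1) ->
    tracks psi chi ps1 -> (#|pdom ps| <= #|pdom ps1|)%N ->
    exists phi, [/\ 0 < p phi, consistent phi chi &
      f (pdom psi :|: pdom (iter m.+1 (step pi phi) ps)) phi + #|pdom ps|%:R * M <=
      value chi + #|pdom (iter m.+1 (step pi phi) ps)|%:R * M].
  move=> step_eq tr1 card_le; have [phi [p_phi phi_chi bound]] := IH _ _ prc_chi tr1.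
  exists phi; rewrite iterSr step_eq //; split => //; apply: le_trans bound.
  by rewrite lerD2l ler_wpM2r // ler_nat.
case pi_ps: (pi ps) => [e|]; last by apply: (determined ps) => // phi; rewrite /step pi_ps.
case ps_e: (ps e) => [o|]; first by apply: (determined ps) => // phi; rewrite /step pi_ps ps_e.
have card_ext o : #|pdom (pext ps e o)| = #|pdom ps|.+1.
  by rewrite pdom_pext cardsU1 inE ps_e.
have step_ext phi : step pi phi ps = pext ps e (phi e) by rewrite /step pi_ps ps_e.
case chi_e: (chi e) => [o|].
  apply: (determined (pext ps e o)); last by rewrite card_ext.
    by move=> phi /consistentP/(_ e o chi_e) phi_e; rewrite step_ext phi_e.
  exact: tracks_known.
have [sub_psi _ _] := tr.
have [o [prc_ext value_ext]] := adversary_step prc_chi sub_psi chi_e.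
have [phi [p_phi + bound]] := IH _ _ prc_ext (tracks_new o tr chi_e).
rewrite consistent_pext // => /andP [phi_chi /eqP phi_e].
exists phi; rewrite iterSr step_ext phi_e; split => //.
move: bound; rewrite card_ext -addn1 natrD mulrDl mul1r; lra.
Qed.

(* Against the adversary, no policy with at most k selections gets more than
   f(dom psi, psi) + k M in the worst case. *)
Lemma fwc_pol_le pi k : card_bounded p k pi -> fwc_pol p f pi <= value psi + k%:R * M.
Proof.
move=> bounded; have [phi [p_phi _ bound]] := adversary pi #|E| prc_psi (tracks_start psi).
have phi_U : phi \in Uplus p by rewrite inE.
apply: (le_trans (minover_le _ phi_U)); apply: (le_trans (f_mono p_phi (subsetUr (pdom psi) _))).
move: bound; rewrite pdom_pempty cards0 mul0r addr0 => /le_trans; apply.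
by rewrite lerD2l ler_wpM2r // ler_nat; apply: bounded.
Qed.

End Adversary.

Section Greedy.
Variables (k : nat) (pig : policy E O) (phi0 : {ffun E -> O}).
Hypothesis greedy : greedy_policy p f k pig.
Hypothesis p_phi0 : 0 < p phi0.

Definition greedy_obs t := iter t (step pig phi0) (pempty E O).

Lemma greedy_obs_step t : consistent phi0 (greedy_obs t) ->
  (#|pdom (greedy_obs t)| < k)%N ->
  exists e, [/\ greedy_obs t.+1 = pext (greedy_obs t) e (phi0 e),
    e \notin pdom (greedy_obs t) &
    forall e', e' \notin pdom (greedy_obs t) ->
      fwc p f e' (greedy_obs t) <= fwc p f e (greedy_obs t)].
Proof.
move=> phi0_t lt_tk; have := greedy (prc_gt0 p_ge0 p_phi0 phi0_t).
rewrite lt_tk => -[e [pig_t e_t e_max]]; exists e; split => //.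
have obs_e : greedy_obs t e = None by apply/eqP; rewrite inE negbK in e_t.
by rewrite /greedy_obs iterS -/(greedy_obs t) /step pig_t obs_e eqxx.
Qed.

Lemma greedy_obs_card t : (t <= k)%N ->
  consistent phi0 (greedy_obs t) /\ #|pdom (greedy_obs t)| = t.
Proof.
elim: t => [_|t IH lt_tk]; first by rewrite pdom_pempty cards0 consistent_pempty.
have [phi0_t card_t] := IH (ltnW lt_tk).
have [|e [-> e_t _]] := greedy_obs_step phi0_t; first by rewrite card_t.
have obs_e : greedy_obs t e = None by apply/eqP; rewrite inE negbK in e_t.
by rewrite consistent_pext // phi0_t eqxx pdom_pext cardsU1 e_t card_t.
Qed.

(* After k steps greedy stops, so its final observation is greedy_obs k. *)
Lemma greedy_run : (k <= #|E|)%N -> run pig phi0 = greedy_obs k.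
Proof.
move=> k_le_E; have [phi0_k card_k] := greedy_obs_card (leqnn k).
have := greedy (prc_gt0 p_ge0 p_phi0 phi0_k); rewrite card_k ltnn => pig_k.
by rewrite /run -(subnK k_le_E) iterD iter_fix // /step pig_k.
Qed.

Section Gap.
Variable pistar : policy E O.
Hypothesis k_gt0 : (0 < k)%N.
Hypothesis bounded : card_bounded p k pistar.

Local Notation OPT := (fwc_pol p f pistar).

(* The paper's key inequality: a greedy step shrinks the gap to OPT by the
   factor 1 - 1/k, since OPT <= f(dom psi, phi0) + k f_wc(e | psi). *)
Lemma gap_contraction psi e : consistent phi0 psi -> e \notin pdom psi ->
  (forall e', e' \notin pdom psi -> fwc p f e' psi <= fwc p f e psi) ->
  OPT - f (e |: pdom psi) phi0 <= (1 - k%:R^-1) * (OPT - f (pdom psi) phi0).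
Proof.
move=> phi0_psi e_psi e_max; have prc_psi := prc_gt0 p_ge0 p_phi0 phi0_psi.
have M_ge0 : 0 <= fwc p f e psi by apply: f_mono_wc.
have gain := fwc_le_gain p_phi0 phi0_psi e_psi.
have := fwc_pol_le prc_psi M_ge0 e_max bounded.
rewrite (value_realized p_phi0 phi0_psi) => opt_le.
have k_pos : 0 < k%:R :> R by rewrite ltr0n.
have gap_le : k%:R^-1 * (OPT - f (pdom psi) phi0) <= fwc p f e psi.
  by rewrite ler_pdivrMl //; lra.
by rewrite mulrBl mul1r; lra.
Qed.

Lemma greedy_gap t : (t <= k)%N ->
  OPT - f (pdom (greedy_obs t)) phi0 <= (1 - k%:R^-1) ^+ t * (OPT - f set0 phi0).
Proof.
elim: t => [_|t IH lt_tk]; first by rewrite pdom_pempty expr0 mul1r.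
have [phi0_t card_t] := greedy_obs_card (ltnW lt_tk).
have [|e [-> e_t e_max]] := greedy_obs_step phi0_t; first by rewrite card_t.
rewrite pdom_pext; apply: (le_trans (gap_contraction phi0_t e_t e_max)).
by rewrite exprS -mulrA ler_wpM2l ?one_sub_inv_nat_ge0 // IH // ltnW.
Qed.

End Gap.

End Greedy.

End WorstCaseUtility.

(* (1 - 1/k)^k <= 1/e, from 1 + x <= e^x at x = -1/k. *)
Lemma one_sub_inv_pow_le (R : realType) (k : nat) : (0 < k)%N ->
  (1 - k%:R^-1) ^+ k <= (expR (1 : R))^-1.
Proof.
move=> k_gt0; have k_neq0 : k%:R != 0 :> R by rewrite pnatr_eq0 -lt0n.
have base : 1 - k%:R^-1 <= expR (- k%:R^-1) :> R by apply: expR_ge1Dx.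
have base_ge0 := one_sub_inv_nat_ge0 R k_gt0.
have := lerXn2r k (base_ge0 : _ \in Num.nneg) (ltW (expR_gt0 _) : _ \in Num.nneg) base.
by rewrite -expRM_natl mulrN mulfV // expRN.
Qed.

Theorem theorem2 (R : realType) (E O : finType)
  (p : {ffun E -> O} -> R) (f : {set E} -> {ffun E -> O} -> R) (k : nat) :
  (forall phi, 0 <= p phi) ->
  \sum_phi p phi = 1 ->
  (forall S phi, 0 <= f S phi) ->
  (0 < k)%N -> (k <= #|E|)%N ->
  wc_monotone p f ->
  wc_submodular p f ->
  minimal_dependency p f ->
  forall pig : policy E O, greedy_policy p f k pig ->
  forall pistar : policy E O, card_bounded p k pistar ->
  (forall pi : policy E O, card_bounded p k pi ->
     fwc_pol p f pi <= fwc_pol p f pistar) ->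
  (1 - (expR (1 : R))^-1) * fwc_pol p f pistar <= fwc_pol p f pig.
Proof.
move=> p_ge0 p_sum f_ge0 k_gt0 k_le_E mono sub md pig greedy pistar bounded _.
have [phi1 p_phi1] := Uplus_nonempty p_ge0 p_sum.
have phi1_U : phi1 \in Uplus p by rewrite inE.
have opt_ge0 : 0 <= fwc_pol p f pistar.
  by rewrite /fwc_pol; have [phi _ ->] := minover_ex (fun phi => f (Esel pistar phi) phi) phi1_U.
rewrite {2}/fwc_pol; have [phi0 + ->] := minover_ex (fun phi => f (Esel pig phi) phi) phi1_U.
rewrite inE => p_phi0; rewrite /Esel (greedy_run p_ge0 greedy p_phi0 k_le_E).
have := greedy_gap p_ge0 mono sub md greedy p_phi0 k_gt0 bounded (leqnn k).
set q := (1 - k%:R^-1) ^+ k; rewrite mulrBr => gap.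
have q_ge0 : 0 <= q by rewrite exprn_ge0 // one_sub_inv_nat_ge0.
have := mulr_ge0 q_ge0 (f_ge0 set0 phi0).
have := ler_wpM2r opt_ge0 (one_sub_inv_pow_le R k_gt0).
rewrite -/q mulrBl mul1r; clearbody q; lra.
Qed.
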